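(* Let $w\in\mathbb{C}\setminus\mathbb{Z}$. Then for all $u,v,r\in\mathbb{C}$ and all $a,b,c,d,e,f\in\mathbb{Z}$, $$\sum_{g\in\mathbb{Z}}W\left(\begin{smallmatrix} f& g\\ e& d\end{smallmatrix}\middle|v-r\right)W\left(\begin{smallmatrix} a& b\\ f& g\end{smallmatrix}\middle|u-r\right)W\left(\begin{smallmatrix} b& c\\ g& d\end{smallmatrix}\middle|u-v\right)=\sum_{g\in\mathbb{Z}}W\left(\begin{smallmatrix} a& g\\ f& e\end{smallmatrix}\middle|u-v\right)W\left(\begin{smallmatrix} g& c\\ e& d\end{smallmatrix}\middle|u-r\right)W\left(\begin{smallmatrix} a& b\\ g& c\end{smallmatrix}\middle|v-r\right),$$ where $W=W^{(1,1)}$.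
   Context: The weights $W^{(1,1)}\left(\begin{smallmatrix} a& b\\ d& c\end{smallmatrix}\middle|u\right)$ ($a,b,c,d\in\mathbb{Z}$, $u\in\mathbb{C}$) are zero unless $|a-b|=|b-c|=|c-d|=|d-a|=1$, and for $l\in\mathbb{Z}$ (both sign choices): $W^{(1,1)}\left(\begin{smallmatrix} l\pm2& l\pm1\\ l\pm1& l\end{smallmatrix}\middle|u\right)=u+1$, $W^{(1,1)}\left(\begin{smallmatrix} l& l\pm1\\ l\pm1& l\end{smallmatrix}\middle|u\right)=\frac{\mp u+l+w}{l+w}$, $W^{(1,1)}\left(\begin{smallmatrix} l& l\pm1\\ l\mp1& l\end{smallmatrix}\middle|u\right)=\frac{u(l\pm1+w)}{l+w}$. *)

From HB Require Import structures.
From mathcomp Require Import all_boot all_order all_algebra.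
From mathcomp Require Import complex.
From mathcomp Require Import boolp classical_sets fsbigop reals.
Set Implicit Arguments. Unset Strict Implicit. Unset Printing Implicit Defensive.
Import Order.TTheory GRing.Theory Num.Theory.
Local Open Scope ring_scope.

(* Arguments in reading order: top-left a, top-right b, bottom-left d,
   bottom-right c.  Zero unless |a-b|=|b-c|=|c-d|=|d-a|=1.
   Given adjacency:
   - a <> c  (then a = l±2, b = d = l±1, c = l)             : u + 1
   - a = c = l, b = d = l±1                                   : (∓u + l + w)/(l + w)
   - a = c = l, b = l±1, d = l∓1                              : u (l±1 + w)/(l + w) = u (b + w)/(l + w) *)
Definition W11 (R : realType) (w : R[i]) (a b d c : int) (u : R[i]) : R[i] :=
  if [&& `|a - b| == 1, `|b - c| == 1, `|c - d| == 1 & `|d - a| == 1] then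
    if a != c then u + 1
    else if b == d then
      (if b == a + 1 then (- u + a%:~R + w) / (a%:~R + w)
       else (u + a%:~R + w) / (a%:~R + w))
    else u * (b%:~R + w) / (a%:~R + w)
  else 0.

From HB Require Import structures.
From mathcomp Require Import all_boot all_order all_algebra.
From mathcomp Require Import complex.
From mathcomp Require Import boolp classical_sets fsbigop reals.
From mathcomp Require Import ring zify.
Set Implicit Arguments. Unset Strict Implicit.
Import GRing.Theory Num.Theory.
Local Open Scope ring_scope.
Local Open Scope classical_set_scope.

(* W11 vanishes unless the four heights around its face change by 1 along
   every edge.  Hence each side is a sum of two terms, over g = d +- 1 and
   g = a +- 1 respectively, and both sides vanish unless the outer hexagon
   a, b, c, d, e, f changes by 1 along every edge.  Shifting all heights by
   l amounts to replacing w by w + l, so one may take d = 0; the remaining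
   32 hexagons are identities between rational functions of u, v, r, w whose
   denominators w, w + 1, w - 1 are nonzero because w is not an integer. *)

Definition adj (x y : int) : bool := `|x - y| == 1.

Lemma adjC (x y : int) : adj x y = adj y x.
Proof. by rewrite /adj distrC. Qed.

Lemma adjP (x y : int) : adj x y -> x = y + 1 \/ x = y - 1.
Proof. by rewrite /adj => /eqP; lia. Qed.

Lemma adjB2r (l x y : int) : adj (x - l) (y - l) = adj x y.
Proof. by rewrite /adj opprB addrA subrK. Qed.

Lemma fsbigT_pair (T : choiceType) (V : nmodType) (F : T -> V) (p q : T) :
  p != q -> (forall g, g != p -> g != q -> F g = 0) ->
  \sum_(g \in [set: T]) F g = F p + F q.
Proof.
move=> pq F0; rewrite (fsbigE [:: p; q]) /= ?inE ?pq //.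
  by rewrite !big_cons big_nil !in_setT addr0.
by move=> g _; rewrite !inE => /norP[]; apply: F0.
Qed.

Lemma fsbigT_adj (V : nmodType) (F : int -> V) (x : int) :
  (forall g, F g != 0 -> adj g x) ->
  \sum_(g \in [set: int]) F g = F (x - 1) + F (x + 1).
Proof.
move=> Fadj; apply: fsbigT_pair => [|g g1 g2]; first by apply/eqP; lia.
apply/eqP/contraT => /Fadj/adjP[]/eqP; by rewrite ?(negbTE g1) ?(negbTE g2).
Qed.

Section Weights.
Variable R : realType.
Implicit Types (w u : R[i]) (a b c d : int).

Lemma W11_support w a b d c u :
  W11 w a b d c u != 0 -> [&& adj a b, adj b c, adj c d & adj d a].
Proof. by rewrite /W11 /adj; case: ifP; rewrite ?eqxx. Qed.

Lemma W11_translate w (l : int) a b d c u :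
  W11 w (l + a) (l + b) (l + d) (l + c) u = W11 (l%:~R + w) a b d c u.
Proof.
have addKl p q : l + p - (l + q) = p - q by rewrite opprD addrACA subrr add0r.
have eq_addl p q : (l + p == l + q) = (p == q) by apply/inj_eq/addrI.
rewrite /W11 !addKl !eq_addl -addrA eq_addl !intrD.
by rewrite -!addrA !(addrCA l%:~R).
Qed.

End Weights.

Section YangBaxter.
Variable R : realType.
Implicit Types (w u v r : R[i]) (a b c d e f g : int).

Definition lhs_summand w u v r a b c d e f g : R[i] :=
  W11 w f g e d (v - r) * W11 w a b f g (u - r) * W11 w b c g d (u - v).

Definition rhs_summand w u v r a b c d e f g : R[i] :=
  W11 w a g f e (u - v) * W11 w g c e d (u - r) * W11 w a b g c (v - r).

Lemma lhs_summand_support w u v r a b c d e f g :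
  lhs_summand w u v r a b c d e f g != 0 ->
  adj g d && cycle adj [:: a; b; c; d; e; f].
Proof.
rewrite /lhs_summand !mulf_eq0 !negb_or [cycle _ _]/= => /andP[/andP[]].
by move=> /W11_support/and4P[_ -> -> ->] /W11_support/and4P[-> _ _ ->]
  /W11_support/and4P[-> -> _ _].
Qed.

Lemma rhs_summand_support w u v r a b c d e f g :
  rhs_summand w u v r a b c d e f g != 0 ->
  adj g a && cycle adj [:: a; b; c; d; e; f].
Proof.
rewrite /rhs_summand !mulf_eq0 !negb_or [cycle _ _]/= => /andP[/andP[]].
by move=> /W11_support/and4P[_ _ -> ->] /W11_support/and4P[_ -> -> _]
  /W11_support/and4P[-> -> _ ->].
Qed.

Lemma lhs_summand_translate w u v r (l : int) a b c d e f g :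
  lhs_summand w u v r (l + a) (l + b) (l + c) (l + d) (l + e) (l + f) (l + g)
  = lhs_summand (l%:~R + w) u v r a b c d e f g.
Proof. by rewrite /lhs_summand !W11_translate. Qed.

Lemma rhs_summand_translate w u v r (l : int) a b c d e f g :
  rhs_summand w u v r (l + a) (l + b) (l + c) (l + d) (l + e) (l + f) (l + g)
  = rhs_summand (l%:~R + w) u v r a b c d e f g.
Proof. by rewrite /rhs_summand !W11_translate. Qed.

Lemma ybe_local0 w (hw : forall k : int, k%:~R + w != 0) u v r a b c e f :
  adj a b -> adj b c -> adj c 0 -> adj 0 e -> adj e f ->
  lhs_summand w u v r a b c 0 e f (-1) + lhs_summand w u v r a b c 0 e f 1
  = rhs_summand w u v r a b c 0 e f (a - 1)
    + rhs_summand w u v r a b c 0 e f (a + 1).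
Proof.
have [w0 w1 wN1] : [/\ w != 0, 1 + w != 0 & -1 + w != 0].
  by move: (hw 0) (hw 1) (hw (-1)); rewrite add0r mulr1z mulrN1z.
move=> hab hbc hc0 h0e hef; rewrite [adj 0 e]adjC [adj e f]adjC in h0e hef.
case/adjP: hc0 => -> in hbc *; case/adjP: hbc => -> in hab *;
  case/adjP: hab => ->; case/adjP: h0e => -> in hef *;
  case/adjP: hef => ->; rewrite /lhs_summand /rhs_summand /W11 /=.
all: by field; rewrite ?w0 ?w1 ?wN1.
Qed.

Lemma ybe_local w (hw : forall n : int, w != n%:~R) u v r a b c d e f :
  cycle adj [:: a; b; c; d; e; f] ->
  lhs_summand w u v r a b c d e f (d - 1)
    + lhs_summand w u v r a b c d e f (d + 1)
  = rhs_summand w u v r a b c d e f (a - 1)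
    + rhs_summand w u v r a b c d e f (a + 1).
Proof.
move=> /and5P[hab hbc hcd hde /andP[hef _]].
have hwd (k : int) : k%:~R + (d%:~R + w) != 0.
  by rewrite addrA -intrD addrC addr_eq0 -intrN.
have := @ybe_local0 _ hwd u v r (a - d) (b - d) (c - d) (e - d) (f - d).
(* every height, the base point 0 included, now has the form x - d *)
rewrite -(subrr d) !adjB2r.
move=> /(_ hab hbc hcd hde hef).
have back x : d + (x - d) = x by rewrite addrC subrK.
rewrite -!lhs_summand_translate -!rhs_summand_translate.
by rewrite !(addrA d (a - d)) !back.
Qed.

End YangBaxter.

Theorem mainTheorem5 (R : realType) (w : R[i])
  (hw : forall n : int, w != n%:~R)
  (u v r : R[i]) (a b c d e f : int) :
  \sum_(g \in [set: int])
     (W11 w f g e d (v - r) * W11 w a b f g (u - r) * W11 w b c g d (u - v))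
  = \sum_(g \in [set: int])
     (W11 w a g f e (u - v) * W11 w g c e d (u - r) * W11 w a b g c (v - r)).
Proof.
change (\sum_(g \in [set: int]) lhs_summand w u v r a b c d e f g
  = \sum_(g \in [set: int]) rhs_summand w u v r a b c d e f g).
have [hex | nhex] := boolP (cycle adj [:: a; b; c; d; e; f]).
  rewrite (fsbigT_adj (x := d)) ?(fsbigT_adj (x := a)); first exact: ybe_local.
    by move=> g /rhs_summand_support/andP[].
  by move=> g /lhs_summand_support/andP[].
rewrite !fsbig1 // => g _; apply: contraNeq nhex.
  by move=> /rhs_summand_support/andP[].
by move=> /lhs_summand_support/andP[].
Qed.
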